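(* Let $A\neq0$ be a constant and consider $$u_{tt}=A\,u_{xxxx}+S'(u_x)\,u_x\,u_{xx}+2S(u_x)\,u_{xx}+Z(u).$$ In each case below, the listed vector fields generate point symmetries of this equation. (i) $S(p)=\beta_0p^{-2}$ with $\beta_0\in\{0,1\}$ and $Z(u)=e^u$: the fields $\partial_t,\ \partial_x,\ 2t\partial_t+x\partial_x-4\partial_u$. (ii) $S(p)=\beta_0p^{-2}$ with $\beta_0\in\{0,1\}$ and $Z(u)=u^{\alpha}$, where $\alpha\neq0,1$: the fields $\partial_t,\ \partial_x,\ 2t\partial_t+x\partial_x-\frac{4u}{\alpha-1}\partial_u$. (iii) $S(p)=p^2$ and $Z\equiv\delta$ with $\delta\neq0$ a constant: the fields $\partial_t,\ \partial_x,\ \partial_u,\ t\partial_u,\ \frac{t}{\delta}\partial_t+\frac{x}{2\delta}\partial_x+t^2\partial_u$. (iv) $S(p)=p^2$ and $Z(u)=e^u$: the fields $\partial_t,\ \partial_x,\ 2t\partial_t+x\partial_x-4\partial_u$.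
   Context: Subscripts denote partial derivatives and a prime denotes the derivative of a function of one variable. *)

From Stdlib Require Import Reals List.
From Coquelicot Require Import Coquelicot.
Import ListNotations.
Open Scope R_scope.

Definition fn2 := R -> R -> R.

Definition Dt (f : fn2) : fn2 := fun t x => Derive (fun s => f s x) t.
Definition Dx (f : fn2) : fn2 := fun t x => Derive (fun y => f t y) x.

Inductive dir := Tdir | Xdir.
Definition Dd (d : dir) : fn2 -> fn2 := match d with Tdir => Dt | Xdir => Dx end.

Definition Dw (w : list dir) (f : fn2) : fn2 := fold_right Dd f w.

Definition smooth2 (f : fn2) : Prop :=
  forall (w : list dir) (t x : R),
    ex_derive (fun s => Dw w f s x) t /\ ex_derive (fun y => Dw w f t y) x.

(* A vector field  tau(t,x,u) d_t + xi(t,x,u) d_x + eta(t,x,u) d_u. *)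
Record vfield := VF {
  vf_t : R -> R -> R -> R;
  vf_x : R -> R -> R -> R;
  vf_u : R -> R -> R -> R }.

Definition Qchar (V : vfield) (u : fn2) : fn2 := fun t x =>
  vf_u V t x (u t x) - vf_t V t x (u t x) * Dt u t x
  - vf_x V t x (u t x) * Dx u t x.

(* Prolongation coefficient phi^J = D_J Q + tau u_{J t} + xi u_{J x},
   evaluated along u (J given by the word w). *)
Definition prol (V : vfield) (u : fn2) (w : list dir) : fn2 := fun t x =>
  Dw w (Qchar V u) t x + vf_t V t x (u t x) * Dw (Tdir :: w) u t x
  + vf_x V t x (u t x) * Dw (Xdir :: w) u t x.

(* A fourth-order equation Delta(t, x, u, u_x, u_xx, u_xxxx, u_tt) = 0,
   given as a function on (the relevant part of) the jet space. *)
Definition jetfun := R -> R -> R -> R -> R -> R -> R -> R.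

Definition eqF (A : R) (S Z : R -> R) : jetfun :=
  fun t x u p q r s => s - A * r - Derive S p * p * q - 2 * S p * q - Z u.

Definition Delta (F : jetfun) (u : fn2) (t x : R) : R :=
  F t x (u t x) (Dx u t x) (Dx (Dx u) t x) (Dx (Dx (Dx (Dx u))) t x)
    (Dt (Dt u) t x).

(* The fourth prolongation pr^(4) V applied to Delta, at the 4-jet of u at
   (t,x): the derivative of Delta along pr^(4) V. *)
Definition prV (F : jetfun) (V : vfield) (u : fn2) (t x : R) : R :=
  let tau := vf_t V t x (u t x) in
  let xi := vf_x V t x (u t x) in
  let eta := vf_u V t x (u t x) in
  Derive (fun e =>
    F (t + e * tau) (x + e * xi) (u t x + e * eta)
      (Dx u t x + e * prol V u [Xdir] t x)
      (Dx (Dx u) t x + e * prol V u [Xdir; Xdir] t x)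
      (Dx (Dx (Dx (Dx u))) t x + e * prol V u [Xdir; Xdir; Xdir; Xdir] t x)
      (Dt (Dt u) t x + e * prol V u [Tdir; Tdir] t x)) 0.

(* Lie's infinitesimal invariance criterion: pr^(4) V (Delta) = 0 at every
   point of the jet space (within the admissible region adm, a condition on
   the values of u and u_x) where Delta = 0.  Jet points are represented as
   jets of smooth functions u at a point (t,x); every jet arises this way
   (e.g. from a polynomial). *)
Definition is_point_symmetry (F : jetfun) (adm : R -> R -> Prop)
    (V : vfield) : Prop :=
  forall u : fn2, smooth2 u -> forall t x : R,
    adm (u t x) (Dx u t x) -> Delta F u t x = 0 -> prV F V u t x = 0.

Definition d_t : vfield := VF (fun _ _ _ => 1) (fun _ _ _ => 0) (fun _ _ _ => 0).
Definition d_x : vfield := VF (fun _ _ _ => 0) (fun _ _ _ => 1) (fun _ _ _ => 0).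
Definition d_u : vfield := VF (fun _ _ _ => 0) (fun _ _ _ => 0) (fun _ _ _ => 1).
Definition t_d_u : vfield := VF (fun _ _ _ => 0) (fun _ _ _ => 0) (fun t _ _ => t).

(* For each listed field the coefficients have the form tau = a t + b, xi = c x + d,
   eta = e0 + e1 u + e2 t + e3 t^2, and then the prolongation coefficients are explicit:
   phi^(x^k) = (e1 - k c) u_(x^k) and phi^(tt) = (e1 - 2 a) u_tt + 2 e3.  Eliminating u_tt
   with the equation turns pr^(4) V (Delta) into a polynomial in u_xx and u_xxxx whose
   coefficients are the determining equations (a = 2 c, one condition on S and one on Z);
   they are checked case by case.

   The prolongation formulas need t- and x-derivatives of u to commute, where u is only
   known to have all iterated partial derivatives separately.  By a Baire category argument
   on a t-interval, the x-derivative of a mixed partial is bounded on a strip above some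
   subinterval, which makes the mixed partials jointly continuous there; Schwarz's theorem
   then gives u_tx = u_xt on a dense set of points of the line x = x0, hence everywhere on
   it by continuity in t. *)

From Stdlib Require Import Reals List Lra Classical ClassicalEpsilon FunctionalExtensionality.
From Coquelicot Require Import Coquelicot.
Import ListNotations.
Open Scope R_scope.
Set Bullet Behavior "Strict Subproofs".

Lemma nested_intervals (lo hi : nat -> R) :
  Un_growing lo -> Un_decreasing hi -> (forall n, lo n <= hi n) ->
  exists c, forall n, lo n <= c <= hi n.
Proof.
  intros Hlo Hhi Hle.
  assert (Hlohi : forall m n, lo m <= hi n).
  { intros m n. destruct (Nat.le_ge_cases m n) as [Hmn | Hnm].
    - apply Rle_trans with (lo n); [apply Rge_le, growing_prop; auto | apply Hle].
    - apply Rle_trans with (hi m); [apply Hle | apply decreasing_prop; auto]. }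
  destruct (completeness (fun r => exists n, r = lo n)) as [c [Hub Hlub]].
  - exists (hi O). intros r [n ->]. apply Hlohi.
  - exists (lo O), O. reflexivity.
  - exists c. intro n. split.
    + apply Hub. now exists n.
    + apply Hlub. intros r [m ->]. apply Hlohi.
Qed.

Definition subinterval (p q : R * R) : Prop :=
  fst p <= fst q /\ fst q < snd q /\ snd q <= snd p.

Lemma subinterval_trans p q r :
  subinterval p q -> subinterval q r -> subinterval p r.
Proof. unfold subinterval; lra. Qed.

Section Baire.
Variable E : nat -> R -> Prop.
Hypothesis E_closed : forall n s, ~ E n s ->
  exists d, 0 < d /\ forall z, Rabs (z - s) < d -> ~ E n z.

Lemma subinterval_off_closed n p :
  fst p < snd p -> ~ (forall s, fst p <= s <= snd p -> E n s) ->
  exists q, subinterval p q /\ forall s, fst q <= s <= snd q -> ~ E n s.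
Proof.
  intros Hp Hnot.
  apply not_all_ex_not in Hnot as [s Hs]. apply imply_to_and in Hs as [Hsp HnE].
  destruct (E_closed n s HnE) as [d [Hd Hnear]].
  exists (Rmax (fst p) (s - d / 2), Rmin (snd p) (s + d / 2)); simpl.
  pose proof (Rmax_l (fst p) (s - d / 2)); pose proof (Rmax_r (fst p) (s - d / 2)).
  pose proof (Rmin_l (snd p) (s + d / 2)); pose proof (Rmin_r (snd p) (s + d / 2)).
  split.
  - unfold subinterval; simpl; repeat split; try lra.
    apply Rmax_lub_lt; apply Rmin_glb_lt; lra.
  - intros z Hz. apply Hnear, Rabs_def1; lra.
Qed.

Lemma Baire_interval a b :
  a < b -> (forall s, a <= s <= b -> exists n, E n s) ->
  exists n q, subinterval (a, b) q /\ forall s, fst q <= s <= snd q -> E n s.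
Proof.
  intros Hab Hcov. apply NNPP; intro Hnone.
  assert (Hstep : forall np : nat * (R * R), exists q, subinterval (a, b) (snd np) ->
    subinterval (snd np) q /\ forall s, fst q <= s <= snd q -> ~ E (fst np) s).
  { intros [n p]. destruct (classic (subinterval (a, b) p)) as [Hp | Hp].
    - destruct (subinterval_off_closed n p) as [q Hq].
      + apply Hp.
      + intro Hall. apply Hnone. now exists n, p.
      + now exists q.
    - exists p. contradiction. }
  destruct (choice _ Hstep) as [next Hnext].
  set (I := fix I n := match n with O => (a, b) | S k => next (k, I k) end).
  assert (HI : forall n, subinterval (a, b) (I n)).
  { induction n as [|n IHn].
    - unfold subinterval; simpl; lra.
    - apply (subinterval_trans _ (I n)); [exact IHn | apply (Hnext (n, I n)), IHn]. }
  assert (HIS : forall n, subinterval (I n) (I (S n))) by (intro n; apply (Hnext (n, I n)), HI).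
  destruct (nested_intervals (fun n => fst (I n)) (fun n => snd (I n))) as [c Hc].
  - intro n. apply HIS.
  - intro n. apply HIS.
  - intro n. destruct (HI n) as [_ [? _]]. lra.
  - destruct (Hcov c (Hc O)) as [n Hn].
    exact (proj2 (Hnext (n, I n) (HI n)) c (Hc (S n)) Hn).
Qed.

End Baire.

Lemma ex_derive_continuity_pt f x : ex_derive f x -> continuity_pt f x.
Proof. intro H. apply continuity_pt_filterlim. exact (ex_derive_continuous f x H). Qed.

Lemma continuity_pt_near f s eps : continuity_pt f s -> 0 < eps ->
  exists d, 0 < d /\ forall z, Rabs (z - s) < d -> Rabs (f z - f s) < eps.
Proof.
  intros Hf Heps.
  destruct (proj1 (continuity_pt_locally f s) Hf (mkposreal eps Heps)) as [d Hd].
  exists d. split; [apply cond_pos | intros z Hz; apply Hd, Hz].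
Qed.

Lemma eq_0_of_zeros_near g t0 :
  continuity_pt g t0 -> (forall d, 0 < d -> exists s, Rabs (s - t0) < d /\ g s = 0) ->
  g t0 = 0.
Proof.
  intros Hg Hzeros. destruct (Req_dec (g t0) 0) as [| Hne]; [assumption|].
  destruct (continuity_pt_near g t0 (Rabs (g t0)) Hg) as [d [Hd Hnear]].
  { now apply Rabs_pos_lt. }
  destruct (Hzeros d Hd) as [s [Hs Hgs]].
  specialize (Hnear s Hs). rewrite Hgs, Rminus_0_l, Rabs_Ropp in Hnear. lra.
Qed.

Definition strip_bounded_at (h : fn2) (x0 : R) (n : nat) (s : R) : Prop :=
  forall y, Rabs (y - x0) <= 1 -> Rabs (h s y) <= INR n.

Section StripBounds.
Variables (h : fn2) (x0 : R).
Hypothesis Hct : forall s y, continuity_pt (fun z => h z y) s.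
Hypothesis Hcx : forall s y, continuity_pt (fun y => h s y) y.

Lemma strip_bounded_at_closed n s : ~ strip_bounded_at h x0 n s ->
  exists d, 0 < d /\ forall z, Rabs (z - s) < d -> ~ strip_bounded_at h x0 n z.
Proof.
  intro HnE. apply not_all_ex_not in HnE as [y Hy].
  apply imply_to_and in Hy as [Hy1 Hy2]. apply Rnot_le_lt in Hy2.
  destruct (continuity_pt_near (fun z => h z y) s (Rabs (h s y) - INR n))
    as [d [Hd Hnear]]; [apply Hct | lra |].
  exists d. split; [exact Hd|]. intros z Hz HEz.
  specialize (Hnear z Hz). specialize (HEz y Hy1). cbv beta in Hnear.
  pose proof (Rabs_triang_inv (h s y) (h z y)).
  rewrite Rabs_minus_sym in Hnear. lra.
Qed.

Lemma strip_bounded_at_some s : exists n, strip_bounded_at h x0 n s.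
Proof.
  destruct (continuity_ab_maj (fun y => Rabs (h s y)) (x0 - 1) (x0 + 1))
    as [ymax [Hmax _]]; [lra | |].
  { intros y _. apply (continuity_pt_comp (fun y => h s y) Rabs);
      [apply Hcx | apply Rcontinuity_abs]. }
  destruct (INR_archimed 1 (Rabs (h s ymax))) as [n Hn]; [lra|].
  exists n. intros y Hy. apply Rabs_le_between in Hy.
  apply Rle_trans with (Rabs (h s ymax)); [apply Hmax; lra | lra].
Qed.

Lemma bounded_on_strip a b : a < b ->
  exists q M, subinterval (a, b) q /\
    forall s y, fst q <= s <= snd q -> Rabs (y - x0) <= 1 -> Rabs (h s y) <= M.
Proof.
  intro Hab.
  destruct (Baire_interval (strip_bounded_at h x0) strip_bounded_at_closed a b Hab
    (fun s _ => strip_bounded_at_some s)) as [n [q [Hq HE]]].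
  exists q, (INR n). split; [exact Hq | intros s y Hs; exact (HE s Hs y)].
Qed.

End StripBounds.

Lemma Rmin_pos_bound r1 r2 r3 r4 : 0 < r1 -> 0 < r2 -> 0 < r3 -> 0 < r4 ->
  exists d, 0 < d /\ d <= r1 /\ d <= r2 /\ d <= r3 /\ d <= r4 /\ d <= 1.
Proof.
  intros. exists (Rmin (Rmin r1 r2) (Rmin (Rmin r3 r4) 1)).
  unfold Rmin; repeat destruct Rle_dec; lra.
Qed.

Lemma continuity_2d_pt_of_Dx_bounded (K : fn2) s x0 q M :
  fst q < s < snd q ->
  continuity_pt (fun z => K z x0) s ->
  (forall u v, ex_derive (fun y => K u y) v) ->
  (forall u y, fst q <= u <= snd q -> Rabs (y - x0) <= 1 -> Rabs (Dx K u y) <= M) ->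
  continuity_2d_pt K s x0.
Proof.
  intros Hs Hct Hdx HM eps.
  assert (HM0 : 0 <= M).
  { apply Rle_trans with (Rabs (Dx K s x0)); [apply Rabs_pos | apply HM; [lra|]].
    rewrite Rminus_diag, Rabs_R0; lra. }
  destruct (continuity_pt_near _ s (eps / 2) Hct) as [d1 [Hd1 Hnear]].
  { pose proof (cond_pos eps); lra. }
  set (d2 := eps / (2 * (M + 1))).
  assert (Hd2 : 0 < d2) by (apply Rdiv_lt_0_compat; [apply cond_pos | lra]).
  destruct (Rmin_pos_bound d1 d2 (s - fst q) (snd q - s)) as [d [Hd Hdle]]; [lra..|].
  exists (mkposreal d Hd); simpl. intros u v Hu Hv.
  assert (Hux : Rabs (K u v - K u x0) <= M * Rabs (v - x0)).
  { apply bounded_variation with (dh := Dx K u). intros y Hy. split.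
    - apply Derive_correct, Hdx.
    - apply HM; [apply Rabs_lt_between in Hu; lra | lra]. }
  assert (Hut : Rabs (K u x0 - K s x0) < eps / 2) by (apply Hnear; lra).
  assert (M * Rabs (v - x0) <= M * d2) by (apply Rmult_le_compat_l; lra).
  assert (M * d2 < eps / 2).
  { unfold d2. apply Rlt_le_trans with ((M + 1) * (eps / (2 * (M + 1)))).
    - apply Rmult_lt_compat_r; [apply Rdiv_lt_0_compat; [apply cond_pos | lra] | lra].
    - right. field. lra. }
  replace (K u v - K s x0) with ((K u v - K u x0) + (K u x0 - K s x0)) by ring.
  eapply Rle_lt_trans; [apply Rabs_triang | lra].
Qed.

Lemma Dw_app w1 w2 f : Dw w1 (Dw w2 f) = Dw (w1 ++ w2) f.
Proof. unfold Dw. now rewrite fold_right_app. Qed.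

Lemma smooth2_Dw f w : smooth2 f -> smooth2 (Dw w f).
Proof. intros Hf w' t x. rewrite Dw_app. apply Hf. Qed.

Lemma smooth2_Dt f : smooth2 f -> smooth2 (Dt f).
Proof. exact (smooth2_Dw f [Tdir]). Qed.

Lemma smooth2_Dx f : smooth2 f -> smooth2 (Dx f).
Proof. exact (smooth2_Dw f [Xdir]). Qed.

Definition Dxn (k : nat) : fn2 -> fn2 := Dw (repeat Xdir k).

Lemma smooth2_Dxn f k : smooth2 f -> smooth2 (Dxn k f).
Proof. exact (smooth2_Dw f (repeat Xdir k)). Qed.

Lemma smooth2_ex_derive_t f : smooth2 f -> forall t x, ex_derive (fun s => f s x) t.
Proof. intros Hf t x. exact (proj1 (Hf [] t x)). Qed.

Lemma smooth2_ex_derive_x f : smooth2 f -> forall t x, ex_derive (fun y => f t y) x.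
Proof. intros Hf t x. exact (proj2 (Hf [] t x)). Qed.

Lemma smooth2_continuity_t f : smooth2 f -> forall t x, continuity_pt (fun s => f s x) t.
Proof. intros Hf t x. apply ex_derive_continuity_pt, smooth2_ex_derive_t, Hf. Qed.

Lemma smooth2_continuity_x f : smooth2 f -> forall t x, continuity_pt (fun y => f t y) x.
Proof. intros Hf t x. apply ex_derive_continuity_pt, smooth2_ex_derive_x, Hf. Qed.

Ltac smooth2_closure :=
  lazymatch goal with
  | |- smooth2 (Dt _) => apply smooth2_Dt; smooth2_closure
  | |- smooth2 (Dx _) => apply smooth2_Dx; smooth2_closure
  | |- smooth2 (Dxn _ _) => apply smooth2_Dxn; smooth2_closure
  | |- smooth2 _ => assumption
  end.

Ltac smooth2_ex_derive :=
  lazymatch goal with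
  | |- ex_derive (fun s => ?f s ?x) ?t => apply (smooth2_ex_derive_t f); smooth2_closure
  | |- ex_derive (fun y => ?f ?t y) ?x => apply (smooth2_ex_derive_x f); smooth2_closure
  end.

Lemma smooth2_Dt_Dx_pt f t0 x0 : smooth2 f -> Dt (Dx f) t0 x0 = Dx (Dt f) t0 x0.
Proof.
  intro Hf. apply Rminus_diag_uniq.
  apply (eq_0_of_zeros_near (fun s => Dt (Dx f) s x0 - Dx (Dt f) s x0)).
  { apply ex_derive_continuity_pt.
    apply (ex_derive_minus (fun s => Dt (Dx f) s x0) (fun s => Dx (Dt f) s x0));
      smooth2_ex_derive. }
  intros d Hd.
  assert (H1 : smooth2 (Dx (Dt (Dx f)))) by smooth2_closure.
  assert (H2 : smooth2 (Dx (Dx (Dt f)))) by smooth2_closure.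
  destruct (bounded_on_strip _ x0 (smooth2_continuity_t _ H1) (smooth2_continuity_x _ H1)
    (t0 - d / 2) (t0 + d / 2)) as [[a1 b1] [M1 [Hq1 HM1]]]; [lra|].
  destruct (bounded_on_strip _ x0 (smooth2_continuity_t _ H2) (smooth2_continuity_x _ H2)
    a1 b1) as [[a2 b2] [M2 [Hq2 HM2]]]; [apply Hq1|].
  unfold subinterval in *; simpl in *.
  exists ((a2 + b2) / 2). split; [apply Rabs_def1; lra|].
  apply Rminus_diag_eq, Schwarz.
  - exists (mkposreal 1 Rlt_0_1). intros u v _ _.
    exact (conj (smooth2_ex_derive_t f Hf u v) (conj (smooth2_ex_derive_x f Hf u v)
      (conj (smooth2_ex_derive_t (Dx f) (smooth2_Dx f Hf) u v)
            (smooth2_ex_derive_x (Dt f) (smooth2_Dt f Hf) u v)))).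
  - refine (continuity_2d_pt_of_Dx_bounded (Dt (Dx f)) _ x0 (a2, b2) M1 _ _ _ _);
      cbn [fst snd]; [lra | apply smooth2_continuity_t; smooth2_closure
      | intros; smooth2_ex_derive |].
    intros u y Hu. apply HM1. lra.
  - refine (continuity_2d_pt_of_Dx_bounded (Dx (Dt f)) _ x0 (a2, b2) M2 _ _ _ _);
      cbn [fst snd]; [lra | apply smooth2_continuity_t; smooth2_closure
      | intros; smooth2_ex_derive |].
    intros u y Hu. apply HM2. lra.
Qed.

Lemma smooth2_Dt_Dx f : smooth2 f -> Dt (Dx f) = Dx (Dt f).
Proof.
  intro Hf. apply functional_extensionality; intro t.
  apply functional_extensionality; intro x. now apply smooth2_Dt_Dx_pt.
Qed.

Lemma smooth2_Dxn_Dt f k : smooth2 f -> Dxn k (Dt f) = Dt (Dxn k f).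
Proof.
  intro Hf. induction k as [|k IHk]; [reflexivity|].
  change (Dx (Dxn k (Dt f)) = Dt (Dx (Dxn k f))).
  rewrite IHk. symmetry. apply smooth2_Dt_Dx, smooth2_Dxn, Hf.
Qed.

Definition affine_vfield (V : vfield) (a b c d e0 e1 e2 e3 : R) : Prop :=
  forall t x w, vf_t V t x w = a * t + b /\ vf_x V t x w = c * x + d /\
    vf_u V t x w = e0 + e1 * w + e2 * t + e3 * t ^ 2.

(* [ring] compares atoms syntactically, so [Derive (fun y => Dxn k u t y) x] and
   [Dxn (S k) u t x] must be brought to the same form. *)
Ltac unfold_derivatives := unfold Dxn, Dw; cbn [fold_right repeat Dd]; unfold Dx, Dt.

Section Prolongation.
Variables (a b c d e0 e1 e2 e3 : R) (V : vfield) (u : fn2).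
Hypothesis HV : affine_vfield V a b c d e0 e1 e2 e3.
Hypothesis Hu : smooth2 u.

Lemma Qchar_affine : Qchar V u = fun t x =>
  e0 + e1 * u t x + e2 * t + e3 * t ^ 2 - (a * t + b) * Dt u t x - (c * x + d) * Dx u t x.
Proof.
  apply functional_extensionality; intro t; apply functional_extensionality; intro x.
  unfold Qchar. destruct (HV t x (u t x)) as [-> [-> ->]]. ring.
Qed.

Definition char_Dxn (k : nat) : fn2 := fun t x =>
  (e1 - INR k * c) * Dxn k u t x - (a * t + b) * Dxn k (Dt u) t x
  - (c * x + d) * Dxn (S k) u t x.

Lemma Dx_char_Dxn k : Dx (char_Dxn k) = char_Dxn (S k).
Proof.
  apply functional_extensionality; intro t; apply functional_extensionality; intro x.
  unfold Dx at 1, char_Dxn. apply is_derive_unique. auto_derive.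
  - repeat split; smooth2_ex_derive.
  - rewrite S_INR. unfold_derivatives. ring.
Qed.

Lemma Dxn_Qchar k : Dxn (S k) (Qchar V u) = char_Dxn (S k).
Proof.
  induction k as [|k IHk].
  - change (Dx (Qchar V u) = char_Dxn 1). rewrite Qchar_affine.
    apply functional_extensionality; intro t; apply functional_extensionality; intro x.
    unfold Dx at 1, char_Dxn. apply is_derive_unique. auto_derive.
    + repeat split; smooth2_ex_derive.
    + cbn [INR]. unfold_derivatives. ring.
  - change (Dx (Dxn (S k) (Qchar V u)) = char_Dxn (S (S k))).
    rewrite IHk. apply Dx_char_Dxn.
Qed.

Lemma prol_Xn k t x :
  prol V u (repeat Xdir (S k)) t x = (e1 - INR (S k) * c) * Dxn (S k) u t x.
Proof.
  unfold prol. change (Dw (repeat Xdir (S k)) (Qchar V u)) with (Dxn (S k) (Qchar V u)).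
  rewrite Dxn_Qchar. unfold char_Dxn. rewrite (smooth2_Dxn_Dt u (S k) Hu).
  destruct (HV t x (u t x)) as [-> [-> _]].
  change (Dw (Tdir :: repeat Xdir (S k)) u) with (Dt (Dxn (S k) u)).
  change (Dw (Xdir :: repeat Xdir (S k)) u) with (Dxn (S (S k)) u).
  ring.
Qed.

Lemma prol_TT t x :
  prol V u [Tdir; Tdir] t x = (e1 - 2 * a) * Dt (Dt u) t x + 2 * e3.
Proof.
  assert (HQt : Dt (Qchar V u) = fun t x => e1 * Dt u t x + e2 + 2 * e3 * t
    - a * Dt u t x - (a * t + b) * Dt (Dt u) t x - (c * x + d) * Dt (Dx u) t x).
  { apply functional_extensionality; intro t'; apply functional_extensionality; intro x'.
    rewrite Qchar_affine. unfold Dt at 1. apply is_derive_unique. auto_derive.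
    - repeat split; smooth2_ex_derive.
    - unfold_derivatives. ring. }
  assert (HQtt : Dt (Dt (Qchar V u)) t x = e1 * Dt (Dt u) t x + 2 * e3
    - 2 * a * Dt (Dt u) t x - (a * t + b) * Dt (Dt (Dt u)) t x
    - (c * x + d) * Dt (Dt (Dx u)) t x).
  { rewrite HQt. unfold Dt at 1. apply is_derive_unique. auto_derive.
    - repeat split; smooth2_ex_derive.
    - unfold_derivatives. ring. }
  unfold prol; cbn [Dw fold_right Dd]. rewrite HQtt.
  rewrite (smooth2_Dt_Dx u Hu), (smooth2_Dt_Dx (Dt u) (smooth2_Dt u Hu)).
  destruct (HV t x (u t x)) as [-> [-> _]]. ring.
Qed.

End Prolongation.

Lemma prV_eqF A S Z V u t x s1 s2 z1 :
  is_derive S (Dx u t x) s1 -> is_derive (Derive S) (Dx u t x) s2 ->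
  is_derive Z (u t x) z1 ->
  prV (eqF A S Z) V u t x =
    prol V u [Tdir; Tdir] t x - A * prol V u [Xdir; Xdir; Xdir; Xdir] t x
    - (s2 * prol V u [Xdir] t x * Dx u t x * Dx (Dx u) t x
       + s1 * prol V u [Xdir] t x * Dx (Dx u) t x
       + s1 * Dx u t x * prol V u [Xdir; Xdir] t x)
    - 2 * (s1 * prol V u [Xdir] t x * Dx (Dx u) t x + S (Dx u t x) * prol V u [Xdir; Xdir] t x)
    - z1 * vf_u V t x (u t x).
Proof.
  intros HS1 HS2 HZ. unfold prV, eqF. apply is_derive_unique. auto_derive.
  - rewrite !Rmult_0_l, !Rplus_0_r. repeat split; eexists; eassumption.
  - rewrite !Rmult_0_l, !Rplus_0_r.
    replace (Derive (fun p => S p) (Dx u t x)) with s1 by (symmetry; now apply is_derive_unique).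
    replace (Derive S (Dx u t x)) with s1 by (symmetry; now apply is_derive_unique).
    replace (Derive (fun p => Derive S p) (Dx u t x)) with s2
      by (symmetry; now apply is_derive_unique).
    replace (Derive (fun w => Z w) (u t x)) with z1 by (symmetry; now apply is_derive_unique).
    ring.
Qed.

(* With u_tt eliminated and a = 2 c, pr^(4) V (Delta) for an affine field is
   u_xx * (lhs - rhs of [S_determining]) + (lhs - rhs of [Z_determining]). *)
Definition S_determining (S : R -> R) (c e1 p : R) : Prop :=
  exists s1 s2, is_derive S p s1 /\ is_derive (Derive S) p s2 /\
    (e1 - 4 * c) * (s1 * p + 2 * S p)
    = s2 * (e1 - c) * p ^ 2 + s1 * (4 * e1 - 5 * c) * p + 2 * S p * (e1 - 2 * c).

Definition Z_determining (Z : R -> R) (a e0 e1 e2 e3 t w : R) : Prop :=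
  exists z1, is_derive Z w z1 /\
    (e1 - 2 * a) * Z w + 2 * e3 = z1 * (e0 + e1 * w + e2 * t + e3 * t ^ 2).

Lemma point_symmetry_eqF A S Z adm V a b c d e0 e1 e2 e3 :
  affine_vfield V a b c d e0 e1 e2 e3 -> a = 2 * c ->
  (forall w p, adm w p -> S_determining S c e1 p) ->
  (forall t w p, adm w p -> Z_determining Z a e0 e1 e2 e3 t w) ->
  is_point_symmetry (eqF A S Z) adm V.
Proof.
  intros HV Hac HS HZ u Hu t x Hadm HDelta.
  destruct (HS _ _ Hadm) as [s1 [s2 [HS1 [HS2 HSeq]]]].
  destruct (HZ t _ _ Hadm) as [z1 [HZ1 HZeq]].
  pose proof (prol_Xn a b c d e0 e1 e2 e3 V u HV Hu) as Hprol_Xn.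
  rewrite (prV_eqF A S Z V u t x s1 s2 z1 HS1 HS2 HZ1),
    (prol_TT a b c d e0 e1 e2 e3 V u HV Hu), (Hprol_Xn 0%nat), (Hprol_Xn 1%nat), (Hprol_Xn 3%nat).
  destruct (HV t x (u t x)) as [_ [_ ->]].
  assert (Hutt : Dt (Dt u) t x = A * Dx (Dx (Dx (Dx u))) t x
    + s1 * Dx u t x * Dx (Dx u) t x + 2 * S (Dx u t x) * Dx (Dx u) t x + Z (u t x)).
  { unfold Delta, eqF in HDelta. rewrite (is_derive_unique _ _ _ HS1) in HDelta. lra. }
  change (Dxn 1 u) with (Dx u); change (Dxn 2 u) with (Dx (Dx u));
    change (Dxn 4 u) with (Dx (Dx (Dx (Dx u)))).
  rewrite Hutt, <- HZeq. subst a. cbn [INR].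
  apply (f_equal (Rmult (Dx (Dx u) t x))) in HSeq. lra.
Qed.

Lemma S_determining_inv_sq beta c e1 p : p <> 0 ->
  S_determining (fun p => beta / p ^ 2) c e1 p.
Proof.
  intro Hp.
  assert (HD : forall y, y <> 0 -> is_derive (fun p => beta / p ^ 2) y (-2 * beta / y ^ 3)).
  { intros y Hy. auto_derive; [exact (pow_nonzero y 2 Hy) | field; exact Hy]. }
  exists (-2 * beta / p ^ 3), (6 * beta / p ^ 4). split; [|split].
  - now apply HD.
  - apply (is_derive_ext_loc (fun y => -2 * beta / y ^ 3)).
    + apply (filter_imp (fun y => y <> 0)); [|exact (open_neq 0 p Hp)].
      intros y Hy. symmetry. now apply is_derive_unique, HD.
    + auto_derive; [exact (pow_nonzero p 3 Hp) | field; exact Hp].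
  - field. exact Hp.
Qed.

(* Needed separately because [0 / p ^ 2] is also defined, and equal to 0, at p = 0. *)
Lemma S_determining_zero c e1 p : S_determining (fun p => 0 / p ^ 2) c e1 p.
Proof.
  assert (H0 : forall y, 0 / y ^ 2 = 0) by (intro; unfold Rdiv; ring).
  assert (HD : forall y, is_derive (fun p => 0 / p ^ 2) y 0).
  { intro y. apply (is_derive_ext (fun _ => 0));
      [intro; now rewrite H0 | exact (is_derive_const 0 y)]. }
  exists 0, 0. split; [|split].
  - apply HD.
  - apply (is_derive_ext (fun _ => 0)); [intro y; symmetry; apply is_derive_unique, HD |].
    exact (is_derive_const 0 p).
  - rewrite H0. ring.
Qed.

Lemma S_determining_beta_inv_sq beta c e1 p : beta = 0 \/ p <> 0 ->
  S_determining (fun p => beta / p ^ 2) c e1 p.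
Proof.
  intros [-> | Hp]; [apply S_determining_zero | now apply S_determining_inv_sq].
Qed.

Lemma S_determining_sq c p : S_determining (fun p => p ^ 2) c 0 p.
Proof.
  exists (2 * p), 2. split; [|split].
  - auto_derive; [exact I | ring].
  - apply (is_derive_ext (fun y => 2 * y)).
    + intro y. symmetry. apply is_derive_unique. auto_derive; [exact I | ring].
    + auto_derive; [exact I | ring].
  - ring.
Qed.

Lemma Z_determining_exp a e0 t w : e0 = -2 * a ->
  Z_determining (fun u => exp u) a e0 0 0 0 t w.
Proof.
  intro He0. exists (exp w). split.
  - auto_derive; [exact I | ring].
  - subst e0. ring.
Qed.

Lemma Z_determining_rpower alpha a e1 t w : 0 < w -> e1 * (1 - alpha) = 2 * a ->
  Z_determining (fun u => Rpower u alpha) a 0 e1 0 0 t w.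
Proof.
  intros Hw He1. exists (alpha * Rpower w (alpha - 1)). split.
  - apply is_derive_Reals, derivable_pt_lim_power, Hw.
  - replace (Rpower w (alpha - 1)) with (Rpower w alpha / w).
    + rewrite <- He1. field. lra.
    + unfold Rminus. rewrite Rpower_plus, Rpower_Ropp, Rpower_1 by exact Hw. reflexivity.
Qed.

Lemma Z_determining_const delta a e0 e1 e2 e3 t w : (e1 - 2 * a) * delta + 2 * e3 = 0 ->
  Z_determining (fun _ => delta) a e0 e1 e2 e3 t w.
Proof.
  intro Hd. exists 0. split; [exact (is_derive_const delta w) | rewrite Hd; ring].
Qed.

Ltac point_symmetry_by a b c d e0 e1 e2 e3 :=
  apply (point_symmetry_eqF _ _ _ _ _ a b c d e0 e1 e2 e3);
  [intros ? ? ?; simpl; repeat split; field; auto | field; auto | intros ? ? ? | intros ? ? ? ?].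

Theorem mainTheorem8 (A : R) (hA : A <> 0) :
  (* (i) S(p) = beta0 p^-2, Z(u) = e^u *)
  (forall beta0 : R, (beta0 = 0 \/ beta0 = 1) ->
     let F := eqF A (fun p => beta0 / p ^ 2) (fun u => exp u) in
     let adm := fun (u p : R) => beta0 = 1 -> p <> 0 in
     is_point_symmetry F adm d_t /\ is_point_symmetry F adm d_x /\
     is_point_symmetry F adm
       (VF (fun t _ _ => 2 * t) (fun _ x _ => x) (fun _ _ _ => -4))) /\
  (* (ii) S(p) = beta0 p^-2, Z(u) = u^alpha, alpha <> 0, 1 *)
  (forall beta0 alpha : R, (beta0 = 0 \/ beta0 = 1) -> alpha <> 0 -> alpha <> 1 ->
     let F := eqF A (fun p => beta0 / p ^ 2) (fun u => Rpower u alpha) in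
     let adm := fun (u p : R) => 0 < u /\ (beta0 = 1 -> p <> 0) in
     is_point_symmetry F adm d_t /\ is_point_symmetry F adm d_x /\
     is_point_symmetry F adm
       (VF (fun t _ _ => 2 * t) (fun _ x _ => x)
           (fun _ _ u => - (4 * u / (alpha - 1))))) /\
  (* (iii) S(p) = p^2, Z = delta <> 0 constant *)
  (forall delta : R, delta <> 0 ->
     let F := eqF A (fun p => p ^ 2) (fun _ => delta) in
     let adm := fun (_ _ : R) => True in
     is_point_symmetry F adm d_t /\ is_point_symmetry F adm d_x /\
     is_point_symmetry F adm d_u /\ is_point_symmetry F adm t_d_u /\
     is_point_symmetry F adm
       (VF (fun t _ _ => t / delta) (fun _ x _ => x / (2 * delta))
           (fun t _ _ => t ^ 2))) /\
  (* (iv) S(p) = p^2, Z(u) = e^u *)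
  (let F := eqF A (fun p => p ^ 2) (fun u => exp u) in
   let adm := fun (_ _ : R) => True in
   is_point_symmetry F adm d_t /\ is_point_symmetry F adm d_x /\
   is_point_symmetry F adm
     (VF (fun t _ _ => 2 * t) (fun _ x _ => x) (fun _ _ _ => -4))).
Proof.
  split; [|split; [|split]]; cbv zeta.
  - intros beta0 Hb. repeat split;
      [point_symmetry_by 0 1 0 0 0 0 0 0 | point_symmetry_by 0 0 0 1 0 0 0 0
      | point_symmetry_by 2 0 1 0 (-4) 0 0 0].
    all: first [apply S_determining_beta_inv_sq; tauto | apply Z_determining_exp; ring].
  - intros beta0 alpha Hb _ Halpha.
    assert (Halpha1 : alpha - 1 <> 0) by (intro; apply Halpha; lra).
    repeat split;
      [point_symmetry_by 0 1 0 0 0 0 0 0 | point_symmetry_by 0 0 0 1 0 0 0 0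
      | point_symmetry_by 2 0 1 0 0 (-4 / (alpha - 1)) 0 0].
    all: first [apply S_determining_beta_inv_sq; tauto
               | apply Z_determining_rpower; [tauto | field; auto]].
  - intros delta Hdelta. repeat split;
      [point_symmetry_by 0 1 0 0 0 0 0 0 | point_symmetry_by 0 0 0 1 0 0 0 0
      | point_symmetry_by 0 0 0 0 1 0 0 0 | point_symmetry_by 0 0 0 0 0 0 1 0
      | point_symmetry_by (1 / delta) 0 (1 / (2 * delta)) 0 0 0 0 1].
    all: first [apply S_determining_sq | apply Z_determining_const; field; auto].
  - repeat split;
      [point_symmetry_by 0 1 0 0 0 0 0 0 | point_symmetry_by 0 0 0 1 0 0 0 0
      | point_symmetry_by 2 0 1 0 (-4) 0 0 0].
    all: first [apply S_determining_sq | apply Z_determining_exp; ring].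
Qed.
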